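(* Let $X$ be a $T_1$ space and $\mathcal{P}$ an ideal of closed subsets of $X$ containing every singleton subset of $X$. Then $X$ is $\tau\mathcal{P}$-compact if and only if $X$ is finite.
   Context: An ideal of closed subsets of $X$ is a family $\mathcal{P}$ of closed subsets closed under finite unions and under passing to closed subsets. $D_f$ is the set of discontinuity points of $f\in\mathbb{R}^X$; $C(X)_\mathcal{P}=\{f\in\mathbb{R}^X\colon\overline{D_f}\in\mathcal{P}\}$; for $f\in C(X)_\mathcal{P}$, $Z_\mathcal{P}(f)=\{x\colon f(x)=0\}$ and $Z_\mathcal{P}[X]$ is the set of all such sets. $X$ is $\tau\mathcal{P}$-compact if every subfamily of $Z_\mathcal{P}[X]$ with the finite intersection property has nonempty intersection. *)

From HB Require Import structures.
From mathcomp Require Import all_boot all_order all_algebra.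
From mathcomp Require Import all_classical all_reals all_analysis.
From mathcomp Require Import Rstruct Rstruct_topology.
From Stdlib Require Import Rdefinitions.
Set Implicit Arguments. Unset Strict Implicit. Unset Printing Implicit Defensive.
Import Order.TTheory GRing.Theory Num.Theory.
Local Open Scope classical_set_scope.

Definition closed_ideal (X : topologicalType) (P : set (set X)) : Prop :=
  (forall A, P A -> closed A) /\
  (forall A B, P A -> P B -> P (A `|` B)) /\
  (forall A B, P A -> closed B -> B `<=` A -> P B).

Definition discont (X : topologicalType) (f : X -> R) : set X :=
  [set x | ~ {for x, continuous f}].

Definition CP (X : topologicalType) (P : set (set X)) : set (X -> R) :=
  [set f | P (closure (discont f))].

Definition ZP (X : topologicalType) (f : X -> R) : set X := [set x | f x = 0%R].
Definition ZPX (X : topologicalType) (P : set (set X)) : set (set X) :=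
  [set Z | exists2 f, CP P f & Z = ZP f].

Definition fip (X : Type) (F : set (set X)) : Prop :=
  forall G : set (set X), finite_set G -> G `<=` F -> \bigcap_(A in G) A !=set0.

Definition tauP_compact (X : topologicalType) (P : set (set X)) : Prop :=
  forall F : set (set X), F `<=` ZPX P -> fip F -> \bigcap_(A in F) A !=set0.

From HB Require Import structures.
From mathcomp Require Import all_boot all_order all_algebra.
From mathcomp Require Import all_classical all_reals all_analysis.
From mathcomp Require Import Rstruct Rstruct_topology.
From Stdlib Require Import Rdefinitions.
Import GRing.Theory.
Local Open Scope classical_set_scope.

(* For a closed C in P, the indicator of C is continuous off C, so it lies in
   C(X)_P and its zero set is the complement of C. In a T1 space this applies
   to every singleton: the cofinite sets X \ {x} are zero sets, and if X is
   infinite they form a family with the finite intersection property but with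
   empty intersection. Conversely, over a finite X any family with the finite
   intersection property meets the finitely many points outside its
   intersection through finitely many members, so its intersection is
   nonempty. *)

Lemma fip_bigcap_neq0 (T : Type) (F : set (set T)) :
  finite_set [set: T] -> fip F -> \bigcap_(A in F) A !=set0.
Proof.
move=> finT fipF.
set N := ~` \bigcap_(A in F) A.
have missing x : exists A, N x -> F A /\ ~ A x.
  case: (pselect (N x)) => [/existsNP[A /not_implyP[FA nAx]]|nNx].
    by exists A.
  by exists setT => /nNx.
have [w wP] := choice missing.
have wNF : w @` N `<=` F by move=> _ [x Nx <-]; case: (wP x Nx).
have finwN : finite_set (w @` N) by apply/finite_image/(sub_finite_set _ finT).
have [y wNy] := fipF _ finwN wNF.
exists y; apply: contrapT => Ny.
by case: (wP y Ny) => _; apply; apply: wNy; exists y.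
Qed.

Lemma fip_setC1 {T : Type} :
  infinite_set [set: T] -> fip [set ~` [set x] | x in [set: T]].
Proof.
move=> infT G finG GC1.
have finUG : finite_set (\bigcup_(A in G) ~` A).
  apply: bigcup_finite => // A /GC1[x _ <-].
  by rewrite setCK; exact: finite_set1.
have [y UGy] : exists y, ~ (\bigcup_(A in G) ~` A) y.
  apply: contrapT => /forallNP UGT; apply: infT.
  by apply: sub_finite_set finUG => y _; apply: contrapT; apply: UGT.
by exists y => A GA; apply: contrapT => nAy; apply: UGy; exists A.
Qed.

Lemma bigcap_setC1 {T : Type} :
  \bigcap_(A in [set ~` [set x] | x in [set: T]]) A = set0.
Proof. by apply/seteqP; split => // y /(_ (~` [set y])); apply => //; exists y. Qed.

Section IndicatorOfClosed.
Variables (X : topologicalType) (C : set X).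
Hypothesis closedC : closed C.

Lemma discont_indic_closed : discont (indic C : X -> R) `<=` C.
Proof.
move=> y ncont; apply: contrapT => nCy; apply: ncont => B.
have nbhsCc : nbhs y (~` C) by apply: open_nbhs_nbhs; split; rewrite ?openC.
rewrite /= {1}/indic memNset //= => /nbhs_singleton B0.
by apply: filterS nbhsCc => z nCz; rewrite /= /indic memNset.
Qed.

Lemma ZP_indic_closed : ZP (indic C : X -> R) = ~` C.
Proof.
apply/seteqP; split => z; rewrite /ZP /indic /=.
  by move=> + Cz; rewrite mem_set //= => /eqP; rewrite oner_eq0.
by move=> nCz; rewrite memNset.
Qed.

Lemma ZPX_setC (P : set (set X)) : closed_ideal P -> P C -> ZPX P (~` C).
Proof.
move=> [_ [_ Psub]] PC; exists (indic C); last by rewrite ZP_indic_closed.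
apply: (Psub C) => //; first exact: closed_closure.
rewrite [X in _ `<=` X](closure_id C).1 //.
by apply: closureS; exact: discont_indic_closed.
Qed.

End IndicatorOfClosed.

Theorem corollary5p6 (X : topologicalType) (P : set (set X)) :
  accessible_space X -> closed_ideal P -> (forall x : X, P [set x]) ->
  (tauP_compact P <-> finite_set [set: X]).
Proof.
move=> T1X idealP P1; split=> [compact | finX F _]; last exact: fip_bigcap_neq0.
apply: contrapT => infX.
have ZPC1 : [set ~` [set x] | x in [set: X]] `<=` ZPX P.
  by move=> _ [x _ <-]; apply: ZPX_setC => //; exact: accessible_closed_set1.
have [y] := compact _ ZPC1 (fip_setC1 infX).
by rewrite bigcap_setC1.
Qed.
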